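(* Let $\mathcal{U}=[k]$ be finite, let $\{\mathbf{p}_u\}_{u\in\mathcal{U}}$ be a probability table with every $\mathbf{p}_u\in(0,1)^n$ and $\sum_ip_u^{(i)}=1$, and let $d$ be a probability distribution on $\mathcal{U}$. Then the vector $(f_d(C^{(i)},C^{(j)}))_{i<j}\in\mathbb{R}^{n(n-1)/2}$ lies in $\mathrm{Co}(\mathcal{H_R})$, the interior of the convex hull of the ranking vectors.
   Context: $f_d(C^{(i)},C^{(j)})=\sum_u d(u)\,p_u^{(i)}/(p_u^{(i)}+p_u^{(j)})$ are the expert graph weights. For a permutation $r=(r_1,\dots,r_n)$ of $[n]$, the ranking vector has coordinates $f_r(C^{(i)},C^{(j)})$, $i<j$, where $f_r(C^{(r_a)},C^{(r_b)})=1$ if $a<b$ and $0$ if $a>b$. $\mathrm{Co}(\mathcal{H_R})$ is the open convex hull (interior of the convex hull, the linear ordering polytope) of the $n!$ ranking vectors in $\mathbb{R}^{n(n-1)/2}$. *)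

From mathcomp Require Import all_boot all_order all_algebra all_fingroup.
Set Implicit Arguments. Unset Strict Implicit. Unset Printing Implicit Defensive.
Import Order.TTheory GRing.Theory Num.Theory.
Local Open Scope ring_scope.

(* Index set of the coordinates of R^{n(n-1)/2}: pairs (i,j) of candidates with i < j. *)
Definition pairs (n : nat) := {ij : 'I_n * 'I_n | (ij.1 < ij.2)%N}.

(* Ranking vector of the ranking r = (r_1,...,r_n), encoded as the permutation
   s : position a |-> candidate r_a.  Coordinate (i,j) is 1 iff candidate i is
   ranked before candidate j, i.e. s^-1 i < s^-1 j. *)
Definition rank_vec (R : numDomainType) (n : nat) (s : {perm 'I_n}) (e : pairs n) : R :=
  if ((s^-1)%g (val e).1 < (s^-1)%g (val e).2)%N then 1 else 0.

Definition in_rank_hull (R : numDomainType) (n : nat) (x : pairs n -> R) : Prop :=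
  exists lam : {perm 'I_n} -> R,
    [/\ forall s, 0 <= lam s,
        \sum_s lam s = 1
      & forall e, x e = \sum_s lam s * rank_vec R s e].

(* x lies in the interior of that convex hull (product/sup-norm topology on R^{n(n-1)/2}). *)
Definition in_open_rank_hull (R : numDomainType) (n : nat) (x : pairs n -> R) : Prop :=
  exists2 eps : R, 0 < eps &
    forall y : pairs n -> R, (forall e, `|y e - x e| < eps) -> in_rank_hull y.

Definition fd (R : numFieldType) (n k : nat) (d : 'I_k -> R) (p : 'I_k -> 'I_n -> R)
  (e : pairs n) : R :=
  \sum_(u < k) d u * p u (val e).1 / (p u (val e).1 + p u (val e).2).

(* Plackett-Luce: for positive weights q on the candidates, choosing the
   candidates one after the other, each with probability proportional to its
   weight among those not yet chosen, gives every ranking a positive probability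
   and ranks i before j with probability q_i / (q_i + q_j).  Mixing these
   distributions for q = p_u with weights d(u) writes f_d as a convex
   combination of all ranking vectors with strictly positive coefficients.
   Such a point is interior: for each pair (i, j), the ranking that puts j right
   after i and the one obtained by exchanging i and j have ranking vectors that
   differ only in the coordinate (i, j), so a small perturbation of f_d is
   absorbed by adjusting the coefficients. *)

From mathcomp Require Import all_boot all_order all_algebra all_fingroup.
From mathcomp Require Import ring lra zify.
Import Order.TTheory GRing.Theory Num.Theory.
Set Implicit Arguments. Unset Strict Implicit.
Local Open Scope ring_scope.

Lemma sum_indicator_mul (R : pzSemiRingType) (T : eqType) (r : seq T) (i : T)
    (F : T -> R) :
  uniq r -> i \in r -> \sum_(x <- r) (x == i)%:R * F x = F i.
Proof.
move=> r_uniq ir; rewrite (bigD1_seq i) //= eqxx mul1r big1 ?addr0 // => x /negbTE ->.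
by rewrite mul0r.
Qed.

Lemma convex_comb_gt0 (R : numDomainType) (I : finType) (d a : I -> R) :
  (forall u, 0 <= d u) -> \sum_u d u = 1 -> (forall u, 0 < a u) ->
  0 < \sum_u d u * a u.
Proof.
move=> d_ge0 d_sum1 a_gt0.
have : \sum_u d u != 0 by rewrite d_sum1 oner_neq0.
rewrite psumr_neq0 // => /hasP [u _ du_gt0].
rewrite (bigD1 u) //= ltr_pwDl ?mulr_gt0 //.
by apply: sumr_ge0 => v _; rewrite mulr_ge0 // ltW.
Qed.

Section PlackettLuce.
Variables (R : realFieldType) (T : eqType) (q : T -> R).
Hypothesis q_gt0 : forall a, 0 < q a.

Definition mass (l : seq T) : R := \sum_(a <- l) q a.

Fixpoint pl_prob (l : seq T) : R :=
  if l is a :: t then q a / mass (a :: t) * pl_prob t else 1.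

Lemma mass_cons_gt0 a l : 0 < mass (a :: l).
Proof.
rewrite /mass big_cons ltr_pwDl //; apply: sumr_ge0 => b _; exact: ltW.
Qed.

Lemma mass_gt0 (S : seq T) : (0 < size S)%N -> 0 < mass S.
Proof. by case: S => // a l _; apply: mass_cons_gt0. Qed.

Lemma pl_prob_gt0 l : 0 < pl_prob l.
Proof.
by elim: l => [|a l IH] //=; rewrite mulr_gt0 // divr_gt0 // mass_cons_gt0.
Qed.

Lemma mass_cons_perm x S t : x \in S -> t \in permutations (rem x S) ->
  mass (x :: t) = mass S.
Proof.
rewrite mem_permutations => xS t_perm; apply: perm_big.
by rewrite perm_sym (permPl (perm_to_rem xS)) perm_cons perm_sym.
Qed.

(* Conditioning on the candidate ranked first. *)
Lemma sum_pl_prob_first S (F : seq T -> R) : uniq S -> (0 < size S)%N ->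
  \sum_(t <- permutations S) pl_prob t * F t =
  \sum_(x <- S) q x / mass S *
    \sum_(t <- permutations (rem x S)) pl_prob t * F (x :: t).
Proof.
move=> S_uniq S_gt0.
rewrite (perm_big _ (permutationsE S_gt0)) undup_id // big_allpairs_dep /=.
apply: eq_big_seq => x xS; rewrite mulr_sumr; apply: eq_big_seq => t t_perm.
by rewrite (mass_cons_perm xS t_perm) mulrA.
Qed.

Lemma sum_pl_prob S : uniq S -> \sum_(t <- permutations S) pl_prob t = 1.
Proof.
move sizeS: (size S) => m; elim: m S sizeS => [|m IH] S sizeS S_uniq.
  by move/size0nil: sizeS => ->; rewrite big_seq1.
have S_gt0 : (0 < size S)%N by rewrite sizeS.
under eq_bigr do rewrite -[pl_prob _]mulr1.
rewrite sum_pl_prob_first //.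
rewrite (eq_big_seq (fun x => q x / mass S)) => [|x xS].
  by rewrite -mulr_suml divff // lt0r_neq0 // mass_gt0.
under eq_bigr do rewrite mulr1.
by rewrite IH ?mulr1 ?rem_uniq // size_rem // sizeS.
Qed.

Lemma pl_prob_before S i j : uniq S -> i \in S -> j \in S -> i != j ->
  \sum_(t <- permutations S) pl_prob t * (index i t < index j t)%N%:R =
  q i / (q i + q j).
Proof.
move sizeS: (size S) => m; elim: m S sizeS => [|m IH] S sizeS S_uniq iS jS ij.
  by move/size0nil: sizeS iS => ->.
set c := q i / (q i + q j).
have S_gt0 : (0 < size S)%N by rewrite sizeS.
have first_cond x : x \in S ->
    \sum_(t <- permutations (rem x S)) pl_prob t *
      (index i (x :: t) < index j (x :: t))%N%:R =
    c + (x == i)%:R * (1 - c) - (x == j)%:R * c.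
  move=> xS /=; have [->|xi] := eqVneq x i.
    rewrite (negbTE ij) /=; under eq_bigr do rewrite mulr1.
    by rewrite sum_pl_prob ?rem_uniq // mul1r mul0r subr0 addrC subrK.
  have [->|xj] := eqVneq x j.
    rewrite /= big1 => [|t _]; last by rewrite mulr0.
    by rewrite mul0r mul1r addr0 subrr.
  rewrite !mul0r addr0 subr0.
  under eq_bigr do rewrite ltnS.
  apply: IH => //; first by rewrite size_rem // sizeS.
  - exact: rem_uniq.
  - by rewrite (mem_rem_uniq _ S_uniq) inE eq_sym xi.
  - by rewrite (mem_rem_uniq _ S_uniq) inE eq_sym xj.
rewrite (sum_pl_prob_first (fun t => (index i t < index j t)%N%:R) S_uniq S_gt0) /=.
under eq_big_seq => x xS do rewrite first_cond //.
have M_gt0 := mass_gt0 S_gt0.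
rewrite (eq_bigr (fun x => q x / mass S * c + ((x == i)%:R * (q i / mass S * (1 - c))
   - (x == j)%:R * (q j / mass S * c)))) => [|x _]; last first.
  by case: eqP => [->|_]; case: eqP => [->|_] /=; ring.
rewrite big_split sumrB /= !sum_indicator_mul // -!mulr_suml -/(mass S).
rewrite divff ?lt0r_neq0 // mul1r /c.
(* The remaining terms cancel since q i * (1 - c) = q j * c. *)
have qi := q_gt0 i; have qj := q_gt0 j.
by field; rewrite !lt0r_neq0 // addr_gt0.
Qed.

End PlackettLuce.

Section PositiveMixture.
Variables (R : realFieldType) (T E : finType) (v : T -> E -> R) (up dn : E -> T).
Hypothesis v_up_dn : forall e e', v (up e) e' - v (dn e) e' = (e' == e)%:R.

Definition shift (z : E -> R) (s : T) : R :=
  \sum_e z e * ((s == up e)%:R - (s == dn e)%:R).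

Lemma sum_shift_mul z (F : T -> R) :
  \sum_s shift z s * F s = \sum_e z e * (F (up e) - F (dn e)).
Proof.
rewrite /shift; under eq_bigr do rewrite mulr_suml; rewrite exchange_big /=.
apply: eq_bigr => e _; under eq_bigr do rewrite -mulrA; rewrite -mulr_sumr.
congr (_ * _).
under eq_bigr do rewrite mulrBl; rewrite sumrB.
by rewrite !(@sum_indicator_mul _ _ _ _ F) ?index_enum_uniq ?mem_index_enum.
Qed.

Lemma sum_shift z : \sum_s shift z s = 0.
Proof.
under eq_bigr do rewrite -[shift z _]mulr1.
by rewrite sum_shift_mul big1 // => e _; rewrite subrr mulr0.
Qed.

Lemma shift_combination z e' : \sum_s shift z s * v s e' = z e'.
Proof.
rewrite sum_shift_mul; under eq_bigr do rewrite v_up_dn mulrC eq_sym.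
by rewrite (@sum_indicator_mul _ _ _ _ z) ?index_enum_uniq ?mem_index_enum.
Qed.

Lemma norm_shift_le z s : `|shift z s| <= \sum_e `|z e|.
Proof.
apply: le_trans (ler_norm_sum _ _ _) _; apply: ler_sum => e _.
rewrite normrM ler_piMr //.
by case: (s == up e); case: (s == dn e); rewrite /= ?subrr ?subr0 ?sub0r ?normrN ?normr0 ?normr1.
Qed.

Lemma positive_mixture_interior (lam : T -> R) (x : E -> R) :
  (forall s, 0 < lam s) -> \sum_s lam s = 1 ->
  (forall e, x e = \sum_s lam s * v s e) ->
  exists2 eps : R, 0 < eps & forall y : E -> R,
    (forall e, `|y e - x e| < eps) ->
    exists mu : T -> R, [/\ forall s, 0 <= mu s, \sum_s mu s = 1
      & forall e, y e = \sum_s mu s * v s e].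
Proof.
move=> lam_gt0 lam_sum1 x_comb.
have lam_le1 s : lam s <= 1.
  by rewrite -lam_sum1 (bigD1 s) //= lerDl sumr_ge0 // => t _; apply: ltW.
(* The product of the weights is a positive lower bound for each of them. *)
pose delta := \prod_s lam s.
have delta_gt0 : 0 < delta by apply: prodr_gt0.
have delta_le s : delta <= lam s.
  rewrite /delta (bigD1 s) //= ler_piMr ?(ltW (lam_gt0 s)) //.
  by apply: prodr_ile1 => t _; rewrite ltW ?lam_le1.
pose N : R := #|E|%:R.
have N1_gt0 : 0 < N + 1 by rewrite ltr_wpDl.
exists (delta / (N + 1)) => [|y y_near]; first by rewrite divr_gt0.
pose z e := y e - x e.
exists (fun s => lam s + shift z s); split.
- move=> s; have shift_le := norm_shift_le z s.
  have sum_z_le : \sum_e `|z e| <= N * (delta / (N + 1)).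
    rewrite /N mulr_natl -sumr_const; apply: ler_sum => e _; exact/ltW/y_near.
  have N_eps_le : N * (delta / (N + 1)) <= delta.
    by rewrite mulrCA ger_pMr // ler_pdivrMr // mul1r lerDl.
  have := lerNnormlW shift_le; have := delta_le s; lra.
- by rewrite big_split /= lam_sum1 sum_shift addr0.
- move=> e; under eq_bigr do rewrite mulrDl.
  by rewrite big_split /= -x_comb shift_combination /z addrC subrK.
Qed.

End PositiveMixture.

Section Rankings.
Variable n : nat.

Definition ranking_seq (s : {perm 'I_n}) : seq 'I_n := map s (enum 'I_n).

Lemma index_ranking_seq s i : index i (ranking_seq s) = (s^-1)%g i.
Proof.
by rewrite /ranking_seq -{1}(permKV s i) index_map ?index_enum_ord //; apply: perm_inj.
Qed.

Lemma ranking_seq_inj : injective ranking_seq.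
Proof.
move=> s t st; apply: invg_inj; apply/permP => i; apply: val_inj.
by rewrite /= -!index_ranking_seq st.
Qed.

Lemma perm_eq_ranking_seqs :
  perm_eq [seq ranking_seq s | s : {perm 'I_n}] (permutations (enum 'I_n)).
Proof.
have rs_uniq : uniq [seq ranking_seq s | s : {perm 'I_n}].
  by rewrite map_inj_uniq ?enum_uniq //; apply: ranking_seq_inj.
apply: uniq_perm => //; first exact: permutations_uniq.
apply: (uniq_min_size rs_uniq _ _).2 => [l /mapP [s _ ->]|].
  rewrite mem_permutations; apply: uniq_perm; rewrite ?enum_uniq //.
  - by rewrite map_inj_uniq ?enum_uniq //; apply: perm_inj.
  - by move=> i; rewrite mem_enum; apply/mapP; exists ((s^-1)%g i); rewrite ?mem_enum ?permKV.
rewrite size_map size_permutations ?enum_uniq // size_enum_ord.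
by rewrite -cardE card_Sn.
Qed.

Lemma big_ranking_seq (V : nmodType) (F : seq 'I_n -> V) :
  \sum_(s : {perm 'I_n}) F (ranking_seq s) =
  \sum_(l <- permutations (enum 'I_n)) F l.
Proof. by rewrite -(perm_big _ perm_eq_ranking_seqs) big_image. Qed.

Lemma rank_vec_index (R : numDomainType) s (e : pairs n) :
  rank_vec R s e =
  (index (val e).1 (ranking_seq s) < index (val e).2 (ranking_seq s))%N%:R.
Proof. by rewrite /rank_vec !index_ranking_seq; case: ltnP. Qed.

(* Exchanging the candidates at the adjacent positions [P i] and [P i + 1]
   changes the relative order of no other pair. *)
Lemma lt_tperm_adjacent (P : {perm 'I_n}) (i j a b : 'I_n) :
  (i < j)%N -> (a < b)%N -> P j = (P i).+1 :> nat -> (a, b) != (i, j) ->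
  (P (tperm i j a) < P (tperm i j b))%N = (P a < P b)%N.
Proof.
move=> ij + Pj.
have P_neq x y : x <> y -> P x <> P y :> nat by move=> xy /val_inj/perm_inj.
case: tpermP => [->|->|/P_neq ai /P_neq aj]; case: tpermP => [->|->|/P_neq bi /P_neq bj];
  rewrite ?eqxx // => ab _; lia.
Qed.

Definition succ_fst (e : pairs n) : 'I_n :=
  Ordinal (leq_ltn_trans (valP e) (ltn_ord (val e).2)).

(* The inverse of a ranking maps each candidate to its position; [adjacent_pos e]
   places candidate [j] right after candidate [i], where [e = (i, j)]. *)
Definition adjacent_pos (e : pairs n) : {perm 'I_n} := tperm (val e).2 (succ_fst e).

Definition adjacent_ranking (e : pairs n) : {perm 'I_n} := ((adjacent_pos e)^-1)%g.

Definition swapped_ranking (e : pairs n) : {perm 'I_n} :=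
  ((tperm (val e).1 (val e).2 * adjacent_pos e)^-1)%g.

Lemma adjacent_pos_snd (e : pairs n) :
  adjacent_pos e (val e).2 = (adjacent_pos e (val e).1).+1 :> nat.
Proof.
case: e => [[i j] /= ij]; rewrite /adjacent_pos /= tpermL tpermD //.
- by apply/eqP => ji; move: ij; rewrite ji ltnn.
- by apply/eqP => /(congr1 val) /=; lia.
Qed.

Lemma rank_vec_adjacent_swapped (R : numDomainType) (e e' : pairs n) :
  rank_vec R (adjacent_ranking e) e' - rank_vec R (swapped_ranking e) e' = (e' == e)%:R.
Proof.
rewrite /rank_vec /adjacent_ranking /swapped_ranking !invgK !permM.
have [-> | e'_neq] := eqVneq e' e.
  by rewrite tpermR [tperm (val e).1 _ _]tpermL adjacent_pos_snd ltnSn ltnNge leqnSn subr0.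
by rewrite lt_tperm_adjacent ?subrr ?(valP e) ?(valP e') ?adjacent_pos_snd.
Qed.

End Rankings.

Section PlackettLuceRankings.
Variables (R : realFieldType) (n : nat) (q : 'I_n -> R).
Hypothesis q_gt0 : forall i, 0 < q i.

Lemma sum_pl_prob_ranking : \sum_s pl_prob q (ranking_seq s) = 1.
Proof. by rewrite (big_ranking_seq (pl_prob q)) sum_pl_prob ?enum_uniq. Qed.

Lemma pl_prob_rank_vec (e : pairs n) :
  \sum_s pl_prob q (ranking_seq s) * rank_vec R s e =
  q (val e).1 / (q (val e).1 + q (val e).2).
Proof.
under eq_bigr do rewrite rank_vec_index.
rewrite (big_ranking_seq
  (fun l => pl_prob q l * (index (val e).1 l < index (val e).2 l)%N%:R)).
rewrite pl_prob_before ?enum_uniq ?mem_enum //.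
by apply/eqP => /(congr1 val) ji; have := valP e; rewrite /= ji ltnn.
Qed.

End PlackettLuceRankings.

Unset Implicit Arguments.

Theorem lemma11 (R : realFieldType) (n k : nat)
  (p : 'I_k -> 'I_n -> R) (d : 'I_k -> R) :
  (forall u i, 0 < p u i < 1) ->
  (forall u, \sum_(i < n) p u i = 1) ->
  (forall u, 0 <= d u) ->
  \sum_(u < k) d u = 1 ->
  in_open_rank_hull (fd d p).
Proof.
move=> p_range _ d_ge0 d_sum1.
have p_gt0 u i : 0 < p u i by case/andP: (p_range u i).
pose lam s := \sum_u d u * pl_prob (p u) (ranking_seq s).
apply: (positive_mixture_interior (@rank_vec_adjacent_swapped n R) (lam := lam)).
- by move=> s; apply: convex_comb_gt0 => // u; apply: pl_prob_gt0.
- rewrite exchange_big /= -[RHS]d_sum1; apply: eq_bigr => u _.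
  by rewrite -mulr_sumr sum_pl_prob_ranking ?mulr1.
- move=> e; rewrite /fd; under [RHS]eq_bigr do rewrite mulr_suml.
  rewrite exchange_big /=; apply: eq_bigr => u _.
  under eq_bigr do rewrite -mulrA.
  by rewrite -mulr_sumr pl_prob_rank_vec // mulrA.
Qed.
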